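(* Let $E$ be an Archimedean vector lattice and suppose $(J_n)_{n\in\mathbb N}$ are uniformly closed ideals of $E$ such that the quotient vector lattice $E/J_n$ has the countable sup property for each $n$. If $\bigcap_{n=1}^\infty J_n=\{0\}$, then $E$ has the countable sup property.
   Context: An ideal $J$ of $E$ is uniformly closed if it is closed under relatively uniform limits (limits $x_k\to x$ for which there is $u\ge0$ and $\varepsilon_k\to0$ with $|x_k-x|\le\varepsilon_k u$). A vector lattice has the countable sup property if every nonempty subset possessing a supremum contains a countable subset with the same supremum. *)

From HB Require Import structures.
From mathcomp Require Import all_boot all_order all_algebra.
From mathcomp Require Import boolp classical_sets cardinality reals topology normedtype sequences.
Set Implicit Arguments. Unset Strict Implicit. Unset Printing Implicit Defensive.
Import Order.TTheory GRing.Theory Num.Theory numFieldNormedType.Exports.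
Local Open Scope classical_set_scope.
Local Open Scope ring_scope.

Section VL.
Variables (R : realType) (V : lmodType R).

Definition is_lub (r : V -> V -> Prop) (S : set V) (s : V) : Prop :=
  (forall x, S x -> r x s) /\ (forall t, (forall x, S x -> r x t) -> r s t).

Definition is_glb (r : V -> V -> Prop) (S : set V) (s : V) : Prop :=
  (forall x, S x -> r s x) /\ (forall t, (forall x, S x -> r t x) -> r t s).

Definition vector_lattice (le : V -> V -> Prop) : Prop :=
  (forall x, le x x) /\
  (forall x y, le x y -> le y x -> x = y) /\
  (forall x y z, le x y -> le y z -> le x z) /\
  (forall x y z, le x y -> le (x + z) (y + z)) /\
  (forall (a : R) x, 0 <= a -> le 0 x -> le 0 (a *: x)) /\
  (forall x y, exists s, is_lub le [set x; y] s) /\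
  (forall x y, exists s, is_glb le [set x; y] s).

Definition is_abs (le : V -> V -> Prop) (x a : V) : Prop :=
  is_lub le [set x; - x] a.

Definition archimedean (le : V -> V -> Prop) : Prop :=
  forall x y, le 0 x -> (forall n : nat, le (n%:R *: x) y) -> x = 0.

Definition ideal (le : V -> V -> Prop) (J : set V) : Prop :=
  [/\ J 0,
      (forall x y, J x -> J y -> J (x + y)),
      (forall (a : R) x, J x -> J (a *: x))
    & (forall x y a b, J x -> is_abs le y a -> is_abs le x b -> le a b -> J y)].

Definition ru_converges (le : V -> V -> Prop) (xk : nat -> V) (x : V) : Prop :=
  exists u : V, le 0 u /\
    exists eps : nat -> R, eps @ \oo --> (0 : R) /\
      forall k a, is_abs le (xk k - x) a -> le a (eps k *: u).

Definition uniformly_closed (le : V -> V -> Prop) (J : set V) : Prop :=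
  forall (xk : nat -> V) (x : V),
    (forall k, J (xk k)) -> ru_converges le xk x -> J x.

Definition countable_sup_property (r : V -> V -> Prop) : Prop :=
  forall (S : set V) (s : V), S !=set0 -> is_lub r S s ->
    exists C : set V, [/\ C `<=` S, countable C & is_lub r C s].

(* The order of the quotient vector lattice E/J, expressed on representatives:
   [x] <= [y] in E/J iff x <= y + z for some z in J. *)
Definition quot_le (le : V -> V -> Prop) (J : set V) (x y : V) : Prop :=
  exists z, J z /\ le x (y + z).

End VL.

From HB Require Import structures.
From mathcomp Require Import all_boot all_order all_algebra.
From mathcomp Require Import boolp classical_sets cardinality reals topology normedtype sequences.
Import Order.TTheory GRing.Theory Num.Theory numFieldNormedType.Exports.
Local Open Scope classical_set_scope.
Local Open Scope ring_scope.

(* The quotient map E -> E/J_n need not preserve the supremum s of S, so we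
   work instead with the set of all [x - s + y], x in S, where [y] is a lower
   bound of the [s - x] in E/J_n.  Its supremum in E/J_n is 0: an upper
   bound [t] makes the lower bounds invariant under subtracting [t], hence
   [k (-t)] <= [s - x0] for all k, and uniform closedness of J_n makes E/J_n
   Archimedean.  A countable subset with supremum 0 in E/J_n yields countably
   many x in S that dominate S modulo J_n; collecting them over all n gives a
   countable subset of S dominating S modulo every J_n, i.e. modulo
   \bigcap_n J_n = {0}. *)

Section VectorLattice.
Context {R : realType} {E : lmodType R} {le : E -> E -> Prop}.
Hypothesis vl : vector_lattice le.

Lemma vl_refl x : le x x.
Proof. by case: vl. Qed.

Lemma vl_trans {x y z} : le x y -> le y z -> le x z.
Proof. by case: vl => _ [_ [+ _]]; apply. Qed.

Lemma vl_lerD2r {x y} z : le x y -> le (x + z) (y + z).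
Proof. by case: vl => _ [_ [_ [+ _]]]; apply. Qed.

Lemma vl_lerD {x y x' y'} : le x y -> le x' y' -> le (x + x') (y + y').
Proof.
move=> lexy lexy'; apply: (vl_trans (vl_lerD2r x' lexy)).
by rewrite ![y + _]addrC; apply: vl_lerD2r.
Qed.

Lemma vl_subr_ge0 x y : le 0 (y - x) <-> le x y.
Proof.
split=> [/(vl_lerD2r x)|/(vl_lerD2r (- x))]; first by rewrite add0r subrK.
by rewrite subrr.
Qed.

Lemma vl_scale_ge0 (a : R) x : 0 <= a -> le 0 x -> le 0 (a *: x).
Proof. by case: vl => _ [_ [_ [_ [+ _]]]]; apply. Qed.

Lemma vl_scale {a : R} {x y} : 0 <= a -> le x y -> le (a *: x) (a *: y).
Proof.
move=> a_ge0 /vl_subr_ge0 lexy; apply/vl_subr_ge0.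
by rewrite -scalerBr; apply: vl_scale_ge0.
Qed.

Lemma vl_join_exists x y : exists s, is_lub le [set x; y] s.
Proof. by case: vl => _ [_ [_ [_ [_ [+ _]]]]]; apply. Qed.

Lemma is_abs_exists x : exists a, is_abs le x a.
Proof. exact: vl_join_exists. Qed.

Lemma is_abs_least x a e : is_abs le x a -> le x e -> le (- x) e -> le a e.
Proof. by case=> _ least lexe lexNe; apply: least => y [->|->]. Qed.

Lemma is_abs_ge {x a} : is_abs le x a -> le x a /\ le 0 a.
Proof.
case=> ub _; have lexa : le x a by apply: ub; left.
have leNxa : le (- x) a by apply: ub; right.
split=> //.
have half_ge0 : 0 <= 2^-1 :> R by rewrite invr_ge0 ler0n.
have := vl_scale half_ge0 (vl_lerD lexa leNxa).
rewrite subrr scaler0 -mulr2n -(scaler_nat 2 a) scalerA.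
by rewrite mulVf ?scale1r ?pnatr_eq0.
Qed.

Lemma is_abs_id {x} : le 0 x -> is_abs le x x.
Proof.
move=> x_ge0; split=> [y [->|->]|t]; last by apply; left.
  exact: vl_refl.
by apply: (vl_trans _ x_ge0); apply/vl_subr_ge0; rewrite opprK add0r.
Qed.

Definition pos (x : E) : E := projT1 (cid (vl_join_exists x 0)).

Lemma pos_lub x : is_lub le [set x; 0] (pos x).
Proof. by rewrite /pos; case: cid. Qed.

Lemma pos_ge x : le x (pos x).
Proof. by apply: (pos_lub x).1; left. Qed.

Lemma pos_ge0 x : le 0 (pos x).
Proof. by apply: (pos_lub x).1; right. Qed.

Lemma pos_least x t : le x t -> le 0 t -> le (pos x) t.
Proof. by move=> lext t_ge0; apply: (pos_lub x).2 => y [->|->]. Qed.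

Lemma pos_mono x y : le x y -> le (pos x) (pos y).
Proof.
by move=> lexy; apply: pos_least (vl_trans lexy (pos_ge y)) (pos_ge0 y).
Qed.

Lemma pos_subr_abs x e a :
  le 0 e -> is_abs le (pos (x - e) - pos x) a -> le a e.
Proof.
move=> e_ge0 /is_abs_least; apply.
  apply: (vl_trans _ e_ge0); apply/vl_subr_ge0; rewrite sub0r opprB.
  by apply/vl_subr_ge0/pos_mono/vl_subr_ge0; rewrite opprB addrC subrK.
apply/vl_subr_ge0; rewrite !opprB addrA; apply/vl_subr_ge0/pos_least.
  by have := vl_lerD2r e (pos_ge (x - e)); rewrite subrK addrC.
by rewrite -(addr0 0); apply: vl_lerD (pos_ge0 _).
Qed.

Section Quotient.
Context {J : set E}.

Lemma quot_leD2r {x y} w : quot_le le J x y -> quot_le le J (x + w) (y + w).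
Proof.
by case=> z [Jz lexy]; exists z; split=> //; rewrite addrAC; apply: vl_lerD2r.
Qed.

Lemma quot_le_subr x y : quot_le le J (x - y) 0 <-> quot_le le J x y.
Proof.
split=> [/(quot_leD2r y)|/(quot_leD2r (- y))]; last by rewrite subrr.
by rewrite subrK add0r.
Qed.

Lemma quot_le_trans_le x y z : quot_le le J x y -> le y z -> quot_le le J x z.
Proof.
case=> j [Jj lexy] leyz; exists j; split=> //.
by apply: vl_trans lexy _; apply: vl_lerD2r.
Qed.

Hypothesis idJ : ideal le J.

Lemma quot_le_of_le x y : le x y -> quot_le le J x y.
Proof. by case: idJ => J0 _ _ _ lexy; exists 0; rewrite addr0. Qed.

Lemma quot_le0_pos x : quot_le le J x 0 <-> J (pos x).
Proof.
case: idJ => _ _ _ Jsolid; split=> [[z [Jz]]|Jpx]; last first.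
  by exists (pos x); rewrite add0r; split; last exact: pos_ge.
rewrite add0r => lexz; have [a az] := is_abs_exists z.
have [leza a_ge0] := is_abs_ge az.
apply: Jsolid _ _ _ _ Jz (is_abs_id (pos_ge0 x)) az _.
exact: pos_least (vl_trans lexz leza) a_ge0.
Qed.

Hypothesis ucJ : uniformly_closed le J.

(* [(z - d/(k+1))^+] lies in J and converges relatively uniformly (regulator
   d) to [z^+]. *)
Lemma quot_le_archimedean {z d} : le 0 d ->
  (forall k : nat, quot_le le J (k%:R *: z) d) -> quot_le le J z 0.
Proof.
move=> d_ge0 kz_le_d; apply/quot_le0_pos.
have inv_ge0 (k : nat) : 0 <= k.+1%:R^-1 :> R by rewrite invr_ge0 ler0n.
apply: (ucJ (fun k => pos (z - k.+1%:R^-1 *: d))).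
  move=> k; apply/quot_le0_pos/quot_le_subr.
  have [j [Jj]] := kz_le_d k.+1; move/(vl_scale (inv_ge0 k)).
  rewrite scalerA mulVf ?pnatr_eq0 // scale1r scalerDr => lez.
  have [_ _ Jscale _] := idJ.
  by exists (k.+1%:R^-1 *: j); split; first exact: Jscale.
exists d; split=> //; exists (fun k => k.+1%:R^-1).
split; first exact: cvg_harmonic.
by move=> k a; apply: pos_subr_abs; apply: vl_scale_ge0.
Qed.

Context {S : set E} {s : E}.

Definition gap_lb : set E := [set y | forall x, S x -> quot_le le J y (s - x)].

Definition gap_set : set E :=
  [set c | exists x y, [/\ S x, gap_lb y & c = y + (x - s)]].

Lemma gap_set_lub {x0} : S x0 -> (forall x, S x -> le x s) ->
  is_lub (quot_le le J) gap_set 0.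
Proof.
move=> Sx0 ubS; split=> [_ [x [y [Sx gy ->]]]|t ubt].
  by have := quot_leD2r (x - s) (gy x Sx); rewrite -[s - x]opprB addNr.
have gap_lbB y : gap_lb y -> gap_lb (y - t).
  move=> gy x Sx; apply/quot_le_subr; rewrite opprB addrAC.
  by apply/quot_le_subr/ubt; exists x, y.
have gap_lbN k : gap_lb (k%:R *: - t).
  elim: k => [|k IHk]; last first.
    by rewrite -addn1 natrD scalerDl scale1r; apply: gap_lbB.
  by move=> x Sx; rewrite scale0r; apply/quot_le_of_le/vl_subr_ge0/ubS.
have x0_le_s : le 0 (s - x0) by apply/vl_subr_ge0/ubS.
have := quot_le_archimedean x0_le_s (fun k => gap_lbN k x0 Sx0).
by rewrite -[- t]sub0r => /quot_le_subr.
Qed.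

Lemma quot_countable_dominating : S !=set0 -> is_lub le S s ->
  countable_sup_property (quot_le le J) ->
  exists D, [/\ D `<=` S, countable D &
    forall t, (forall x, D x -> le x t) -> forall x, S x -> quot_le le J x t].
Proof.
move=> [x0 Sx0] [ubS _] csp.
have gap_set0 : gap_set !=set0.
  exists (0 + (x0 - s)), x0, 0; split=> // x Sx.
  by apply/quot_le_of_le/vl_subr_ge0/ubS.
have [C [CS Cc [_ lubC]]] := csp _ _ gap_set0 (gap_set_lub Sx0 ubS).
have /choice[f fP] : forall c, exists x,
    gap_set c -> S x /\ exists2 y, gap_lb y & c = y + (x - s).
  move=> c; case: (pselect (gap_set c)) => [[x [y [Sx gy ->]]]|not_gap].
    by exists x => _; split; last by exists y.
  by exists s => /not_gap[].
exists (f @` C); split; first by move=> _ [c /CS/fP[Sfc _] <-].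
  exact: card_le_trans (card_image_le _ _) Cc.
move=> t ubt x Sx; apply/quot_le_subr; rewrite -[x - t]opprB -sub0r.
apply/quot_le_subr/lubC => c Cc'; have [_ [y gy ->]] := fP c (CS _ Cc').
apply: quot_le_trans_le (quot_leD2r (f c - s) (gy x Sx)) _.
by rewrite addrC subrKA; apply/vl_lerD2r/ubt; exists c.
Qed.

End Quotient.

Lemma le_of_quot_le_all {J : nat -> set E} {x y} :
  (forall n, ideal le (J n)) -> \bigcap_n J n = [set 0] ->
  (forall n, quot_le le (J n) x y) -> le x y.
Proof.
move=> idJ capJ xy; have : (\bigcap_n J n) (pos (x - y)).
  by move=> n _; apply/(quot_le0_pos (idJ n))/quot_le_subr.
rewrite capJ => /= px0; apply/vl_subr_ge0.
by have := vl_lerD2r (y - x) (pos_ge (x - y)); rewrite px0 add0r subrKA subrr.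
Qed.

End VectorLattice.

Theorem proposition4p15 (R : realType) (E : lmodType R) (le : E -> E -> Prop)
    (J : nat -> set E) :
  vector_lattice le -> archimedean le ->
  (forall n, ideal le (J n)) ->
  (forall n, uniformly_closed le (J n)) ->
  (forall n, countable_sup_property (quot_le le (J n))) ->
  \bigcap_n J n = [set 0] ->
  countable_sup_property le.
Proof.
(* Archimedeanity of E is implied by the other hypotheses, since {0} is then
   uniformly closed; only that of the quotients E/J_n is used. *)
move=> vl _ idJ ucJ cspJ capJ S s S0 lubS.
have /choice[D DP] n :=
  quot_countable_dominating vl (idJ n) (ucJ n) S0 lubS (cspJ n).
have DS n : D n `<=` S by case: (DP n).
exists (\bigcup_n D n); split.
- by move=> x [n _ /DS].
- by apply: bigcup_countable => [|n _]; [exact: countableP|case: (DP n)].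
have [ubS leastS] := lubS.
split=> [x [n _ /DS /ubS //]|t ubt].
apply: leastS => x Sx; apply: (le_of_quot_le_all vl idJ capJ) => n.
by case: (DP n) => _ _; apply=> // y Dy; apply: ubt; exists n.
Qed.
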